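(* Let PS1 and PS2 be pure strategies (as in the context) with $m_{PS1}$ finite, and suppose PS2 is complementary to PS1, i.e. $\Delta_{PS1}(X)<\Delta_{PS2}(X)$ for some $X\in\mathcal{S}_{\mathrm{non}}$. Then there exists a mixed strategy MS derived from PS1 and PS2 such that $m_{MS}(X)\le m_{PS1}(X)$ for every initial population $X$ and $m_{MS}(X)<m_{PS1}(X)$ for some initial population $X$.
   Context: A fitness function $f$ on a finite set is to be maximised. A metaheuristic generates populations $\Phi_0,\Phi_1,\dots$. Let $\mathcal{S}$ be the finite set of all populations, $\mathcal{S}_{\mathrm{opt}}$ those containing at least one optimal solution, $\mathcal{S}_{\mathrm{non}}=\mathcal{S}\setminus\mathcal{S}_{\mathrm{opt}}$. The sequence is a time-homogeneous Markov chain on $\mathcal{S}$ with transition probabilities $P(X,Y)=\Pr(\Phi_{t+1}=Y\mid\Phi_t=X)$, every state of $\mathcal{S}_{\mathrm{opt}}$ absorbing. The expected hitting time $m(X)\in[0,\infty]$ is the expected number of generations until first entering $\mathcal{S}_{\mathrm{opt}}$ from $\Phi_0=X$ ($m(X)=0$ on $\mathcal{S}_{\mathrm{opt}}$). A pure strategy is such a time-independent transition matrix. PS1, PS2 are pure strategies with transition matrices $P_1,P_2$ on the same $\mathcal{S}$ (with $\mathcal{S}_{\mathrm{opt}}$ absorbing), expected hitting times $m_{PS1},m_{PS2}$. A mixed strategy MS derived from PS1 and PS2 assigns to each $X\in\mathcal{S}$ probabilities $P_X(PS1)\in[0,1]$, $P_X(PS2)=1-P_X(PS1)$, and has transition matrix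 $P_{MS}(X,Y)=P_X(PS1)P_1(X,Y)+P_X(PS2)P_2(X,Y)$, with expected hitting time $m_{MS}$. With $d(X)=m_{PS1}(X)$, for $X\in\mathcal{S}_{\mathrm{non}}$: $\Delta_{PS1}(X)=d(X)-\sum_{Y\in\mathcal{S}_{\mathrm{non}}}P_1(X,Y)d(Y)$, $\Delta_{PS2}(X)=d(X)-\sum_{Y\in\mathcal{S}_{\mathrm{non}}}P_2(X,Y)d(Y)$. *)

From mathcomp Require Import all_boot all_order all_algebra.
From mathcomp Require Import all_classical all_reals all_analysis.
Set Implicit Arguments. Unset Strict Implicit. Unset Printing Implicit Defensive.
Import Order.TTheory GRing.Theory Num.Theory.
Local Open Scope ring_scope.

Section Hitting.
Variables (R : realType) (S : finType) (opt : {pred S}).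

Definition transition_matrix (P : S -> S -> R) : Prop :=
  [/\ (forall X Y, 0 <= P X Y),
      (forall X, \sum_(Y : S) P X Y = 1) &
      (forall X, X \in opt -> P X X = 1)].

(* surv P t X = Pr(Phi_0, ..., Phi_t all lie in S_non | Phi_0 = X)
             = Pr(T > t | Phi_0 = X), T the first hitting time of S_opt. *)
Fixpoint surv (P : S -> S -> R) (t : nat) (X : S) : R :=
  if X \in opt then 0 else
  match t with
  | 0 => 1
  | t'.+1 => \sum_(Y : S) P X Y * surv P t' Y
  end.

(* expected hitting time m(X) = E[T] = sum_{t>=0} Pr(T > t), in [0, +oo] *)
Definition hit_time (P : S -> S -> R) (X : S) : \bar R :=
  (\sum_(0 <= t <oo) (surv P t X)%:E)%E.

Definition Delta (P1 P : S -> S -> R) (X : S) : R :=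
  fine (hit_time P1 X) -
  \sum_(Y : S | Y \notin opt) P X Y * fine (hit_time P1 Y).

Definition mixed (q : S -> R) (P1 P2 : S -> S -> R) : S -> S -> R :=
  fun X Y => q X * P1 X Y + (1 - q X) * P2 X Y.

End Hitting.

(** A function [f >= 0] with [1 + P f <= f] off the optimal set dominates the
    expected hitting time, since it dominates every partial sum of the
    survival series.  Let [d = m_PS1]; it satisfies the Bellman equation
    [d = 1 + P1 d].  At a state [X0] where PS2 is complementary,
    [Delta_PS1 X0 < Delta_PS2 X0] says exactly [1 + P2 d < d] at [X0].  The
    mixed strategy playing PS2 at [X0] and PS1 elsewhere therefore has [d] as
    a supersolution, strict at [X0], so its hitting time is at most [d]
    everywhere and strictly smaller at [X0]. *)

From mathcomp Require Import all_boot all_order all_algebra.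
From mathcomp Require Import all_classical all_reals all_analysis.
Set Implicit Arguments. Unset Strict Implicit.
Import Order.TTheory GRing.Theory Num.Theory.
Local Open Scope ring_scope.

Section HittingTime.
Variables (R : realType) (S : finType) (opt : {pred S}) (P : S -> S -> R).
Hypothesis P_ge0 : forall X Y, 0 <= P X Y.

Lemma surv_ge0 t X : 0 <= surv opt P t X.
Proof.
elim: t X => [|t IHt] X /=; case: ifP => // _.
by apply: sumr_ge0 => Y _; rewrite mulr_ge0.
Qed.

Lemma surv_opt t X : X \in opt -> surv opt P t X = 0.
Proof. by case: t => [|t] /= ->. Qed.

Lemma hit_time_ge0 X : (0 <= hit_time opt P X)%E.
Proof. by apply: nneseries_ge0 => t _ _; rewrite lee_fin surv_ge0. Qed.

Lemma hit_time_opt X : X \in opt -> hit_time opt P X = 0%E.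
Proof. by move=> Xopt; apply: eseries0 => t _ _; rewrite surv_opt. Qed.

Lemma hit_time_bellman X : X \notin opt ->
  hit_time opt P X = (1 + \sum_(Y : S) (P X Y)%:E * hit_time opt P Y)%E.
Proof.
move=> Xnon; rewrite /hit_time (nneseries_split 0 1); last first.
  by move=> t _; rewrite lee_fin surv_ge0.
rewrite add0n big_nat1 /= (negbTE Xnon); congr (_ + _)%E.
rewrite -nneseries_addn; last by move=> t; rewrite lee_fin surv_ge0.
under eq_eseriesr do
  rewrite addn1 /= (negbTE Xnon) -sumEFin (eq_bigr _ (fun Y _ => EFinM _ _)).
rewrite nneseries_sum; last by move=> Y t _; rewrite -EFinM lee_fin mulr_ge0 ?surv_ge0.
apply: eq_bigr => Y _; rewrite nneseriesZl // => t _.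
by rewrite lee_fin surv_ge0.
Qed.

Variable f : S -> R.
Hypothesis f_ge0 : forall X, 0 <= f X.
Hypothesis f_super : forall X, X \notin opt -> 1 + \sum_(Y : S) P X Y * f Y <= f X.

Lemma sum_surv_le n X : \sum_(0 <= t < n) surv opt P t X <= f X.
Proof.
elim: n X => [|n IHn] X; first by rewrite big_geq.
have [Xopt|Xnon] := boolP (X \in opt).
  by rewrite big1 // => t _; rewrite surv_opt.
rewrite big_nat_recl //= (negbTE Xnon); apply: le_trans (f_super Xnon).
rewrite lerD2l exchange_big; apply: ler_sum => Y _.
by rewrite -mulr_sumr ler_wpM2l.
Qed.

Lemma hit_time_le X : (hit_time opt P X <= (f X)%:E)%E.
Proof.
apply: lime_le; first by apply: is_cvg_nneseries => t _ _; rewrite lee_fin surv_ge0.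
by apply: nearW => n; rewrite sumEFin lee_fin sum_surv_le.
Qed.

Lemma hit_time_lt X : X \notin opt ->
  1 + \sum_(Y : S) P X Y * f Y < f X -> (hit_time opt P X < (f X)%:E)%E.
Proof.
move=> Xnon; rewrite -lte_fin hit_time_bellman // => f_strict.
apply: le_lt_trans f_strict; rewrite EFinD -sumEFin leeD2l //.
apply: lee_sum => Y _; rewrite EFinM lee_wpmul2l ?lee_fin //.
exact: hit_time_le.
Qed.

End HittingTime.

Section FiniteHittingTime.
Variables (R : realType) (S : finType) (opt : {pred S}) (P : S -> S -> R).
Hypothesis P_ge0 : forall X Y, 0 <= P X Y.
Hypothesis hit_time_fin : forall X, (hit_time opt P X < +oo)%E.

Local Notation d X := (fine (hit_time opt P X)).

Lemma hit_time_fineK X : hit_time opt P X = (d X)%:E.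
Proof. by rewrite fineK // ge0_fin_numE ?hit_time_ge0. Qed.

Lemma fine_hit_time_ge0 X : 0 <= d X.
Proof. by rewrite fine_ge0 ?hit_time_ge0. Qed.

Lemma fine_hit_time_bellman X : X \notin opt ->
  d X = 1 + \sum_(Y : S) P X Y * d Y.
Proof.
move=> Xnon; apply/EFin_inj; rewrite -hit_time_fineK hit_time_bellman //.
by rewrite EFinD -sumEFin; under eq_bigr do rewrite hit_time_fineK -EFinM.
Qed.

Lemma sum_notin_opt_hit_time (Q : S -> S -> R) X :
  \sum_(Y | Y \notin opt) Q X Y * d Y = \sum_(Y : S) Q X Y * d Y.
Proof.
rewrite [RHS](bigID (mem opt)) /= [X in _ = X + _]big1 ?add0r // => Y Yopt.
by rewrite hit_time_opt // mulr0.
Qed.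

Lemma Delta_ltE (Q1 Q2 : S -> S -> R) X :
  (Delta opt P Q1 X < Delta opt P Q2 X) =
  (\sum_(Y : S) Q2 X Y * d Y < \sum_(Y : S) Q1 X Y * d Y).
Proof. by rewrite /Delta !sum_notin_opt_hit_time ltrD2l ltrN2. Qed.

End FiniteHittingTime.

Lemma mixed_indicatorE (R : realType) (S : finType) (b : pred S)
  (P1 P2 : S -> S -> R) X Y :
  mixed (fun Z => (b Z)%:R) P1 P2 X Y = if b X then P1 X Y else P2 X Y.
Proof.
by rewrite /mixed; case: (b X); rewrite ?subrr ?subr0 !(mul0r, mul1r, addr0, add0r).
Qed.

Theorem lemma3 (R : realType) (S : finType) (opt : {pred S})
  (P1 P2 : S -> S -> R) :
  transition_matrix opt P1 -> transition_matrix opt P2 ->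
  (forall X, (hit_time opt P1 X < +oo)%E) ->
  (exists X, X \notin opt /\ Delta opt P1 P1 X < Delta opt P1 P2 X) ->
  exists q : S -> R,
    (forall X, 0 <= q X <= 1) /\
    (forall X, (hit_time opt (mixed q P1 P2) X <= hit_time opt P1 X)%E) /\
    (exists X, (hit_time opt (mixed q P1 P2) X < hit_time opt P1 X)%E).
Proof.
move=> [P1_ge0 _ _] [P2_ge0 _ _] P1_fin [X0 [X0non]].
rewrite Delta_ltE // => complementary.
set d := fun X => fine (hit_time opt P1 X).
have d_ge0 X : 0 <= d X by apply: fine_hit_time_ge0.
pose q X := (X != X0)%:R : R.
have MS_ge0 X Y : 0 <= mixed q P1 P2 X Y by rewrite mixed_indicatorE; case: ifP.
have MSE X : \sum_(Y : S) mixed q P1 P2 X Y * d Y =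
    \sum_(Y : S) (if X != X0 then P1 X Y else P2 X Y) * d Y.
  by apply: eq_bigr => Y _; rewrite mixed_indicatorE.
have d_strict : 1 + \sum_(Y : S) mixed q P1 P2 X0 Y * d Y < d X0.
  by rewrite MSE eqxx [ltRHS]fine_hit_time_bellman // ltrD2l.
have d_super X : X \notin opt -> 1 + \sum_(Y : S) mixed q P1 P2 X Y * d Y <= d X.
  move=> Xnon; have [->|XX0] := eqVneq X X0; first exact: ltW.
  by rewrite MSE XX0 -fine_hit_time_bellman.
exists q; split; [|split].
- by move=> X; rewrite /q; case: (X != X0); rewrite ?lexx ?ler01.
- move=> X; rewrite (hit_time_fineK P1_ge0 P1_fin).
  exact: (hit_time_le MS_ge0 d_ge0 d_super).
- exists X0; rewrite (hit_time_fineK P1_ge0 P1_fin).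
  exact: (hit_time_lt MS_ge0 d_ge0 d_super X0non d_strict).
Qed.
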